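(* Let $\mathcal J=\mathbb N\times(\mathbb N\cup\{\infty\})$ be Johnstone's dcpo, equipped with its Scott topology, and let $\mu$ be the map on the Scott-open subsets of $\mathcal J$ given by $\mu(U)=1$ if $U\neq\emptyset$ and $\mu(\emptyset)=0$. Then $\mu$ is a point-continuous valuation on $\mathcal J$ that is not a minimal valuation.
   Context: Johnstone's dcpo: $\mathcal J=\mathbb N\times(\mathbb N\cup\{\infty\})$ ($\infty$ is a new element above all natural numbers), ordered by $(a,b)\le(c,d)$ iff either ($a=c$ and $b\le d$) or ($d=\infty$ and $b\le c$). For a topological space $X$ with lattice of open sets $\mathcal O X$, a valuation is a map $\nu:\mathcal OX\to[0,\infty]$ with $\nu(\emptyset)=0$, monotone, and modular ($\nu(U)+\nu(V)=\nu(U\cup V)+\nu(U\cap V)$); it is continuous if it preserves suprema of directed families of open sets. Continuous valuations are ordered pointwise (stochastic order), forming a dcpo $\mathcal VX$ in which directed suprema are pointwise. $\delta_x$ is the Dirac valuation ($\delta_x(U)=1$ if $x\in U$, else $0$). A simple valuation is a finite sum $\sum_{i=1}^n r_i\delta_{x_i}$ with $r_i\in[0,\infty)$. The minimal valuations are the elements of the smallest subset of $\mathcal VX$ containing all simple valuations and closed under directed suprema in $\mathcal VX$. A valuation $\nu$ is point-continuous if for every open $U$ and every real $r$ with $0\le r<\nu(U)$ there is a finite subset $A\subseteq U$ such that $\nu(V)>r$ for every open $V\supseteq A$. *)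

From Stdlib Require List.
From mathcomp Require Import all_boot all_order all_algebra.
From mathcomp Require Import all_classical all_reals ereal.
Set Implicit Arguments. Unset Strict Implicit. Unset Printing Implicit Defensive.
Import Order.TTheory GRing.Theory Num.Theory.
Local Open Scope classical_set_scope.
Local Open Scope ring_scope.

Definition directed_by {T : Type} (le : T -> T -> Prop) (D : set T) : Prop :=
  D !=set0 /\
  (forall x y, D x -> D y -> exists2 z, D z & le x z /\ le y z).

Definition is_lub {T : Type} (le : T -> T -> Prop) (D : set T) (s : T) : Prop :=
  (forall x, D x -> le x s) /\ (forall u, (forall x, D x -> le x u) -> le s u).

Definition scott_open {T : Type} (le : T -> T -> Prop) (U : set T) : Prop :=
  (forall x y, le x y -> U x -> U y) /\
  (forall D s, directed_by le D -> is_lub le D s -> U s -> D `&` U !=set0).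

(* [None] plays the role of infinity. *)
Definition Jtype := (nat * option nat)%type.

Definition le_inf (b d : option nat) : Prop :=
  match d with
  | None => True
  | Some d' => match b with Some b' => (b' <= d')%N | None => False end
  end.

Definition Jle (p q : Jtype) : Prop :=
  (p.1 = q.1 /\ le_inf p.2 q.2) \/ (q.2 = None /\ le_inf p.2 (Some q.1)).

Definition Jopen : set Jtype -> Prop := scott_open Jle.

Section Valuations.
Context {X : Type} (isOpen : set X -> Prop) {R : realType}.
Local Open Scope ereal_scope.

Definition is_valuation (nu : set X -> \bar R) : Prop :=
  (forall U, isOpen U -> 0 <= nu U) /\
  nu set0 = 0 /\
  (forall U V, isOpen U -> isOpen V -> U `<=` V -> nu U <= nu V) /\
  (forall U V, isOpen U -> isOpen V ->
     nu U + nu V = nu (U `|` V) + nu (U `&` V)).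

Definition directed_opens (D : set (set X)) : Prop :=
  (forall U, D U -> isOpen U) /\ directed_by (fun U V => U `<=` V) D.

Definition is_cont_valuation (nu : set X -> \bar R) : Prop :=
  is_valuation nu /\
  (forall D, directed_opens D ->
     nu (\bigcup_(U in D) U) = ereal_sup [set nu U | U in D]).

Definition val_le (nu1 nu2 : set X -> \bar R) : Prop :=
  forall U, isOpen U -> nu1 U <= nu2 U.

Definition dirac (x : X) : set X -> \bar R :=
  fun U => if `[< U x >] then 1 else 0.

Definition simple_of (s : seq (R * X)) : set X -> \bar R :=
  fun U => \sum_(p <- s) ((p.1)%:E * dirac p.2 U).

Definition is_simple_valuation (nu : set X -> \bar R) : Prop :=
  exists s : seq (R * X), (forall p, List.In p s -> (0 <= p.1)%R) /\
    (forall U, isOpen U -> nu U = simple_of s U).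

Definition is_directed_sup (F : set (set X -> \bar R)) (nu : set X -> \bar R) :=
  (forall f, F f -> is_cont_valuation f) /\ directed_by val_le F /\
  is_cont_valuation nu /\
  (forall U, isOpen U -> nu U = ereal_sup [set f U | f in F]).

Definition is_minimal_valuation (nu : set X -> \bar R) : Prop :=
  forall S : set (set X -> \bar R),
    (forall f, is_cont_valuation f -> is_simple_valuation f -> S f) ->
    (forall F g, F `<=` S -> is_directed_sup F g -> S g) ->
    S nu.

Definition is_point_continuous (nu : set X -> \bar R) : Prop :=
  forall U (r : R), isOpen U -> (0 <= r)%R -> r%:E < nu U ->
    exists A : seq X, (forall a, List.In a A -> U a) /\
      forall V, isOpen V -> (forall a, List.In a A -> V a) -> r%:E < nu V.

End Valuations.

Definition Jmu (R : realType) : set Jtype -> \bar R :=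
  fun U => if `[< U !=set0 >] then 1%E else 0%E.

(* Call a valuation on J tame if its total mass is infinite, or if
   (i) its mass on the corners {(a,b) | K <= a, K <= b} tends to 0, and
   (ii) uniformly in m : nat -> nat, it gives almost full mass to the opens
        {(a,b) | a <= N or m a <= b} once N is large.
   Simple valuations are tame, having finitely many atoms, each with finite
   first coordinate. Tameness passes to directed suprema: (ii) is inherited
   from one member of the family close to the supremum on J, and (i) follows
   from (ii) and the fact that members of a directed family of bounded mass
   cannot all be heavy on arbitrarily many consecutive windows of columns,
   since an upper bound of k of them would carry mass about k * eta.
   Hence minimal valuations are tame, while mu is not: every corner contains
   a point (a, oo), so mu gives it mass 1. *)

From mathcomp Require Import all_boot all_order all_algebra.
From mathcomp Require Import all_classical all_reals ereal.
From mathcomp Require Import lra.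
Set Implicit Arguments. Unset Strict Implicit. Unset Printing Implicit Defensive.
Import Order.TTheory GRing.Theory Num.Theory.
Local Open Scope classical_set_scope.
Local Open Scope ring_scope.

Lemma le_inf_trans a b c : le_inf a b -> le_inf b c -> le_inf a c.
Proof.
case: c => [c|] //; case: b => [b|] //; case: a => [a|] //= ab bc.
exact: leq_trans bc.
Qed.

Lemma Jle_column c n m : (n <= m)%N -> Jle (c, Some n) (c, Some m).
Proof. by left. Qed.

Lemma Jle_inf c b : Jle (c, b) (c, None).
Proof. by left; split => //; case: b. Qed.

Lemma Jle_jump c n c' : (n <= c')%N -> Jle (c, Some n) (c', None).
Proof. by right. Qed.

Lemma Jle_snd p q : Jle p q -> le_inf p.2 q.2.
Proof. by case=> [[]|[->]]. Qed.

Lemma Jopen_up U p q : Jopen U -> Jle p q -> U p -> U q.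
Proof. by case=> up _; exact: up. Qed.

Lemma Jopen_column U c : Jopen U -> U (c, None) -> exists n, U (c, Some n).
Proof.
move=> [_ inacc] Uc.
pose D := [set p : Jtype | p.1 = c /\ exists n, p.2 = Some n].
have dirD : directed_by Jle D.
  split; first by exists (c, Some 0%N); split => //; exists 0%N.
  move=> [_ _] [_ _] [/= -> [n1 ->]] [/= -> [n2 ->]].
  exists (c, Some (maxn n1 n2)); first by split => //; exists (maxn n1 n2).
  by split; apply: Jle_column; rewrite ?leq_maxl ?leq_maxr.
have lubD : is_lub Jle D (c, None).
  split; first by move=> [a b] [/= -> _]; exact: Jle_inf.
  move=> [a [d|]] ub.
    case: (ub (c, Some d.+1)) => [|[_ /=]|[//]]; last by rewrite ltnn.
    by split=> //; exists d.+1.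
  case: (ub (c, Some a.+1)) => [|[/= <- _]|[_ /=]]; last by rewrite ltnn.
  - by split=> //; exists a.+1.
  - exact: Jle_inf.
by case: (inacc D _ dirD lubD Uc) => -[a b] [[/= -> [n ->]] Un]; exists n.
Qed.

Lemma Jopen_intro U :
  (forall p q, Jle p q -> U p -> U q) ->
  (forall c, U (c, None) -> exists n, U (c, Some n)) -> Jopen U.
Proof.
move=> up col; split => // D [c ob] [[x0 Dx0] _] [ubD lub] Us.
apply: contrapT => DU0.
have notU x : D x -> ~ U x by move=> Dx Ux; apply: DU0; exists x.
have below_col n x : D x -> U (c, Some n) -> x.1 = c ->
    exists2 b, x.2 = Some b & (b < n)%N.
  case: x => a [b|] Dx Un /= ac; subst a; last first.
    by case: (notU _ Dx); apply: up Us; exact: Jle_inf.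
  exists b => //; rewrite ltnNge; apply/negP => nb; apply: (notU _ Dx).
  by apply: up Un; exact: Jle_column.
case: ob Us lub ubD => [n|] Us lub ubD.
- have inD x : D x -> x.1 = c by case: x => a b Dx; case: (ubD _ Dx) => [[]|[]].
  have [b _ b_lt] := below_col _ _ Dx0 Us (inD _ Dx0).
  have : Jle (c, Some n) (c, Some n.-1).
    apply: lub => -[a b'] Dx; have /= ac := inD _ Dx; subst a.
    have [b'' /= -> b''n] := below_col _ _ Dx Us erefl.
    by apply: Jle_column; rewrite -ltnS prednK // (leq_ltn_trans _ b_lt).
  by case=> [[_ /=]|[//]]; rewrite leqNgt ltn_predL (leq_ltn_trans _ b_lt).
- have [n Un] := col _ Us.
  have ub x : D x -> Jle x ((maxn c n).+1, None).
    case: x => a b Dx; case: (ubD _ Dx) => [[/= ac _]|[_ /=]].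
    + subst a; have [b' /= -> b'n] := below_col _ _ Dx Un erefl.
      by apply/Jle_jump/leqW/(leq_trans (ltnW b'n)); rewrite leq_maxr.
    + case: b Dx => [b|//] Dx /= bc.
      by apply/Jle_jump/leqW/(leq_trans bc); rewrite leq_maxl.
  case: (lub _ ub) => [[/= cc _]|[_ //]].
  by move: (leq_maxl c n); rewrite {1}cc ltnn.
Qed.

Lemma JopenT : Jopen setT.
Proof. by apply: Jopen_intro => // c _; exists 0%N. Qed.

Lemma JopenU U V : Jopen U -> Jopen V -> Jopen (U `|` V).
Proof.
move=> oU oV; apply: Jopen_intro.
  by move=> p q pq [Up|Vp]; [left; exact: Jopen_up Up|right; exact: Jopen_up Vp].
move=> c [Uc|Vc].
- by have [n Un] := Jopen_column oU Uc; exists n; left.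
- by have [n Vn] := Jopen_column oV Vc; exists n; right.
Qed.

Lemma JopenI U V : Jopen U -> Jopen V -> Jopen (U `&` V).
Proof.
move=> oU oV; apply: Jopen_intro.
  by move=> p q pq [Up Vp]; split; [exact: Jopen_up pq Up|exact: Jopen_up pq Vp].
move=> c [Uc Vc].
have [n1 Un1] := Jopen_column oU Uc; have [n2 Vn2] := Jopen_column oV Vc.
exists (maxn n1 n2); split.
- by apply: Jopen_up oU _ Un1; apply: Jle_column; rewrite leq_maxl.
- by apply: Jopen_up oV _ Vn2; apply: Jle_column; rewrite leq_maxr.
Qed.

Lemma Jopen_tail U : Jopen U -> U !=set0 ->
  exists K, forall c, (K <= c)%N -> U (c, None).
Proof.
move=> oU [[a b] Uab].
have [n Un] := Jopen_column oU (Jopen_up oU (Jle_inf a b) Uab).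
by exists n => c nc; apply: Jopen_up oU _ Un; exact: Jle_jump.
Qed.

Lemma Jopen_meet U V : Jopen U -> Jopen V -> U !=set0 -> V !=set0 ->
  U `&` V !=set0.
Proof.
move=> oU oV /(Jopen_tail oU) [K1 UK1] /(Jopen_tail oV) [K2 VK2].
exists (maxn K1 K2, None); split.
- by apply: UK1; rewrite leq_maxl.
- by apply: VK2; rewrite leq_maxr.
Qed.

Section Jmu.
Variable R : realType.
Local Open Scope ereal_scope.

Lemma Jmu1 U : U !=set0 -> Jmu R U = 1.
Proof. by move=> U0; rewrite /Jmu asboolT. Qed.

Lemma Jmu0 U : ~ (U !=set0) -> Jmu R U = 0.
Proof. by move=> U0; rewrite /Jmu asboolF. Qed.

Lemma Jmu_ge0 U : 0 <= Jmu R U.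
Proof. by rewrite /Jmu; case: asboolP. Qed.

Lemma Jmu_valuation : is_valuation Jopen (Jmu R).
Proof.
split; first by move=> U _; exact: Jmu_ge0.
split; first by rewrite Jmu0 // => -[].
split.
  move=> U V _ _ UV; have [[x Ux]|U0] := pselect (U !=set0).
    by rewrite !Jmu1 //; exists x => //; exact: UV.
  by rewrite (Jmu0 U0) Jmu_ge0.
move=> U V oU oV.
have [U0|U0] := pselect (U !=set0); have [V0|V0] := pselect (V !=set0).
- have [x Ux] := U0.
  by rewrite !Jmu1 //; [exact: Jopen_meet|exists x; left].
- have [x Ux] := U0; rewrite (Jmu1 U0) (Jmu0 V0) (Jmu1 (ex_intro _ x (or_introl Ux))).
  by rewrite Jmu0 // => -[y [_ Vy]]; apply: V0; exists y.
- have [x Vx] := V0; rewrite (Jmu0 U0) (Jmu1 V0) (Jmu1 (ex_intro _ x (or_intror Vx))).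
  by rewrite Jmu0 ?add0e ?adde0 // => -[y [Uy _]]; apply: U0; exists y.
- rewrite (Jmu0 U0) (Jmu0 V0) !Jmu0 //; first by move=> [x [Ux _]]; apply: U0; exists x.
  by move=> [x [Ux|Vx]]; [apply: U0|apply: V0]; exists x.
Qed.

Lemma Jmu_point_continuous : is_point_continuous Jopen (Jmu R).
Proof.
move=> U r oU r0; have [[a Ua]|U0] := pselect (U !=set0); last first.
  by rewrite (Jmu0 U0) lte_fin ltNge r0.
rewrite Jmu1; last by exists a.
move=> r1; exists [:: a]; split; first by move=> x [<-|[]].
by move=> V oV Va; rewrite Jmu1 //; exists a; apply: Va; left.
Qed.

End Jmu.

Definition corner (K : nat) : set Jtype :=
  [set p | (K <= p.1)%N /\ le_inf (Some K) p.2].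

Definition above_graph (N : nat) (m : nat -> nat) : set Jtype :=
  [set p | (p.1 <= N)%N \/ le_inf (Some (m p.1)) p.2].

Definition band (a d K : nat) : set Jtype :=
  [set p | ((a < p.1 <= d)%N \/ (K <= p.1)%N) /\ le_inf (Some K) p.2].

Lemma Jle_above K p q : Jle p q -> le_inf (Some K) p.2 ->
  le_inf (Some K) q.2 /\ (q.1 = p.1 \/ (K <= q.1)%N).
Proof.
move=> pq Kp; split; first exact: le_inf_trans Kp (Jle_snd pq).
by case: pq => [[-> _]|[_ pq]]; [left|right; exact: le_inf_trans Kp pq].
Qed.

Lemma corner_open K : Jopen (corner K).
Proof.
apply: Jopen_intro => [p q pq [Kp1 Kp2]|c [Kc _]]; last by exists K; split => /=.
by rewrite /corner /=; have [Kq2 [->|Kq1]] := Jle_above pq Kp2.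
Qed.

Lemma band_open a d K : Jopen (band a d K).
Proof.
apply: Jopen_intro => [p q pq [p1 Kp2]|c [c1 _]]; last by exists K; split => /=.
by rewrite /band /=; have [Kq2 [->|Kq1]] := Jle_above pq Kp2; split=> //; right.
Qed.

Lemma above_graph_open N m : Jopen (above_graph N m).
Proof.
apply: Jopen_intro => [[a b] [c d] pq /= p_in|c _]; rewrite /above_graph /=; last first.
  by exists (m c); right.
case: pq => [[/= <- bd]|[/= -> _]]; last by right.
by case: p_in => [|mb]; [left|right; exact: le_inf_trans mb bd].
Qed.

Lemma bandU a b d K : (a <= b)%N -> (b <= d)%N ->
  band a b K `|` band b d K = band a d K.
Proof.
move=> ab bd; apply/seteqP; split => -[c e]; rewrite /band /=.
- case=> -[[/andP [ac cb]|Kc] Ke]; split=> //; try by right.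
  + by left; rewrite ac (leq_trans cb bd).
  + by left; rewrite (leq_ltn_trans ab ac) cb.
- move=> [[/andP [ac cd]|Kc] Ke]; last by left; split=> //; right.
  by case: (leqP c b) => cb; [left|right]; split=> //; left; apply/andP.
Qed.

Lemma bandI a b d K : (b < K)%N -> band a b K `&` band b d K = corner K.
Proof.
move=> bK; apply/seteqP; split => -[c e]; rewrite /band /corner /=.
- move=> [[ac Ke] [bc _]]; split=> //; case: ac => [/andP [_ cb]|//].
  case: bc => [/andP [bc _]|Kc]; first by move: (leq_ltn_trans cb bc); rewrite ltnn.
  by move: (leq_ltn_trans cb bK); rewrite ltnNge Kc.
- by move=> [Kc Ke]; split; split=> //; right.
Qed.

Section FiniteValuation.
Context {X : Type} {isOpen : set X -> Prop} {R : realType}.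
Hypothesis openT : isOpen setT.
Hypothesis openU : forall U V, isOpen U -> isOpen V -> isOpen (U `|` V).
Hypothesis openI : forall U V, isOpen U -> isOpen V -> isOpen (U `&` V).
Variable f : set X -> \bar R.
Hypotheses (fv : is_valuation isOpen f) (fT : f setT != +oo%E).

Lemma valuation_fin_num U : isOpen U -> f U \is a fin_num.
Proof.
move: fv => [ge0 [_ [mono _]]] oU; rewrite ge0_fin_numE ?ge0 //.
by apply: le_lt_trans (mono _ _ oU openT (@subsetT _ U)) _; rewrite ltey.
Qed.

Lemma valuation_fineK U : isOpen U -> f U = (fine (f U))%:E.
Proof. by move=> oU; rewrite fineK // valuation_fin_num. Qed.

Lemma fine_valuation_ge0 U : isOpen U -> 0 <= fine (f U).
Proof. by move=> oU; rewrite -lee_fin -valuation_fineK //; exact: fv.1. Qed.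

Lemma fine_valuation_le U V : isOpen U -> isOpen V -> U `<=` V ->
  fine (f U) <= fine (f V).
Proof.
by move=> oU oV UV; apply: fine_le; rewrite ?valuation_fin_num //; exact: fv.2.2.1.
Qed.

Lemma fine_valuation_modular U V : isOpen U -> isOpen V ->
  fine (f U) + fine (f V) = fine (f (U `|` V)) + fine (f (U `&` V)).
Proof.
move=> oU oV; have oUV := openU oU oV; have oUnV := openI oU oV.
by rewrite -!fineD ?valuation_fin_num // fv.2.2.2.
Qed.

Lemma fine_valuation_subadditive U V : isOpen U -> isOpen V ->
  fine (f (U `|` V)) <= fine (f U) + fine (f V).
Proof.
move=> oU oV; rewrite fine_valuation_modular //.
by rewrite lerDl fine_valuation_ge0 //; exact: openI.
Qed.

End FiniteValuation.

Lemma fine_val_le {X : Type} {isOpen : set X -> Prop} {R : realType}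
    (openT : isOpen setT) (f g : set X -> \bar R) :
  is_valuation isOpen f -> f setT != +oo%E ->
  is_valuation isOpen g -> g setT != +oo%E ->
  val_le isOpen f g -> forall U, isOpen U -> fine (f U) <= fine (g U).
Proof.
move=> fv fT gv gT fg U oU.
by apply: fine_le; rewrite ?(valuation_fin_num openT) //; exact: fg.
Qed.

Lemma directed_upper_bound {T : Type} (le : T -> T -> Prop) (D : set T)
    (x : nat -> T) k :
  (forall y x z, le x y -> le y z -> le x z) -> directed_by le D ->
  (forall j, (j < k)%N -> D (x j)) -> exists2 z, D z & forall j, (j < k)%N -> le (x j) z.
Proof.
move=> le_trans [[z0 Dz0] dirD]; elim: k => [|k IH] Dx; first by exists z0.
have [z Dz xz] := IH (fun j jk => Dx j (ltnW jk)).
have [w Dw [zw xkw]] := dirD _ _ Dz (Dx k (ltnSn k)).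
exists w => // j; rewrite ltnS leq_eqVlt => /orP [/eqP -> //|jk].
exact: le_trans (xz j jk) zw.
Qed.

Lemma val_le_trans {X : Type} (isOpen : set X -> Prop) {R : realType}
    (g f h : set X -> \bar R) :
  val_le isOpen f g -> val_le isOpen g h -> val_le isOpen f h.
Proof. by move=> fg gh U oU; exact: le_trans (fg U oU) (gh U oU). Qed.

Lemma simple_of_eq {X : Type} {R : realType} (s : seq (R * X)) (U V : set X) :
  (forall p, List.In p s -> (U p.2 <-> V p.2)) -> simple_of s U = simple_of s V.
Proof.
elim: s => [|p s IH] UV; first by rewrite /simple_of !big_nil.
rewrite /simple_of !big_cons -!/(simple_of s _) IH; last by move=> q sq; apply: UV; right.
by rewrite /dirac (propext (UV p (or_introl erefl))).
Qed.

Lemma simple_of0 {X : Type} {R : realType} (s : seq (R * X)) :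
  simple_of s set0 = 0%E.
Proof.
rewrite /simple_of big1 // => p _.
by rewrite /dirac asboolF ?mule0.
Qed.

Lemma seq_bounded {T : Type} (g : T -> nat) (s : seq T) :
  exists B, forall p, List.In p s -> (g p < B)%N.
Proof.
elim: s => [|p s [B IH]]; first by exists 0%N.
exists (maxn B (g p).+1) => q [<-|sq]; first by rewrite leq_max leqnn orbT.
by rewrite leq_max IH.
Qed.

Section Tame.
Context {R : realType}.
Implicit Types f g h : set Jtype -> \bar R.

Definition corner_negligible f := forall e : R, 0 < e ->
  exists K0, forall K, (K0 <= K)%N -> (f (corner K) <= e%:E)%E.

Definition graph_tight f := forall e : R, 0 < e ->
  exists N0, forall N, (N0 <= N)%N -> forall m,
    (f setT <= f (above_graph N m) + e%:E)%E.

Definition tame f := f setT = +oo%E \/ (graph_tight f /\ corner_negligible f).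

Lemma Jmu_not_tame : ~ tame (Jmu R).
Proof.
case; first by rewrite Jmu1 //; exists (0%N, None).
move=> [_ /(_ (1 / 2)) []]; first by rewrite divr_gt0.
move=> K0 /(_ K0 (leqnn K0)); rewrite Jmu1; last by exists (K0, None); split => /=.
by rewrite lee_fin; lra.
Qed.

Lemma simple_tame f : is_simple_valuation Jopen f -> tame f.
Proof.
move=> [s [_ fs]]; right.
have [B sB] := seq_bounded (fun p : R * Jtype => p.2.1) s.
split=> e e0; exists B.
- move=> N BN m; rewrite (fs _ JopenT) (fs _ (above_graph_open N m)).
  rewrite (@simple_of_eq _ _ s (above_graph N m) setT) ?leeDl ?lee_fin ?ltW //.
  by move=> p /sB ps; split=> // _; left; exact: leq_trans (ltnW ps) BN.
- move=> K BK; rewrite (fs _ (corner_open K)) (@simple_of_eq _ _ s _ set0).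
    by rewrite simple_of0 lee_fin ltW.
  move=> p /sB ps; split=> // -[Kp _].
  by move: (leq_trans BK Kp); rewrite leqNgt ps.
Qed.

Lemma band_mass_bound h (N : nat -> nat) (eta : R) k K :
  is_valuation Jopen h -> h setT != +oo%E ->
  {homo N : i j / (i <= j)%N} -> (N k < K)%N ->
  (forall j, (j < k)%N -> eta < fine (h (band (N j) (N j.+1) K))) ->
  k%:R * eta <= fine (h (band (N 0%N) (N k) K)) + k%:R * fine (h (corner K)).
Proof.
move=> hv hT N_homo NkK heavy.
have modular := fine_valuation_modular JopenT JopenU JopenI hv hT.
suff claim : forall j, (j <= k)%N ->
    j%:R * eta <= fine (h (band (N 0%N) (N j) K)) + j%:R * fine (h (corner K)).
  exact: claim k (leqnn k).
elim=> [_|j IH jk].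
  by rewrite !mul0r addr0 (fine_valuation_ge0 JopenT hv hT (band_open _ _ _)).
have NjK : (N j < K)%N by apply: leq_ltn_trans NkK; exact/N_homo/ltnW.
have := modular _ _ (band_open (N 0%N) (N j) K) (band_open (N j) (N j.+1) K).
rewrite bandU ?bandI //; try exact/N_homo.
have := heavy j jk; have := IH (ltnW jk); rewrite -natr1 !mulrDl !mul1r; lra.
Qed.

Lemma corner_above_graph_cover V Nw L N K :
  Jopen V -> (forall c, (Nw < c <= L)%N -> V (c, None)) -> (Nw <= N < K)%N ->
  exists m, corner K `&` above_graph N m `<=` V `|` corner L.+1.
Proof.
move=> oV coverV /andP [NwN NK].
have col c : exists n, (Nw < c <= L)%N -> V (c, Some n).
  have [cL|] := boolP (Nw < c <= L)%N; last by exists 0%N.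
  by have [n Vn] := Jopen_column oV (coverV c cL); exists n.
have [n Vn] := choice col.
exists (fun c => maxn (n c) L.+1) => -[c b] [[/= Kc Kb] [/= cN|/= mb]].
  by move: (leq_ltn_trans cN (leq_trans NK Kc)); rewrite ltnn.
have [cL|Lc] := leqP c L.
- left; have cW : (Nw < c <= L)%N.
    by rewrite cL (leq_ltn_trans NwN (leq_trans NK Kc)).
  case: b Kb mb => [b|] _ /= mb; last exact: coverV.
  apply: Jopen_up oV _ (Vn c cW); apply: Jle_column.
  exact: leq_trans (leq_maxl _ _) mb.
- by right; split=> //; apply: le_inf_trans mb; rewrite /= leq_maxr.
Qed.

Lemma corner_mass_le h K N m W :
  is_valuation Jopen h -> h setT != +oo%E -> Jopen W ->
  corner K `&` above_graph N m `<=` W ->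
  fine (h (corner K)) + fine (h (above_graph N m)) <= fine (h setT) + fine (h W).
Proof.
move=> hv hT oW sub; have oK := corner_open K; have oA := above_graph_open N m.
rewrite (fine_valuation_modular JopenT JopenU JopenI hv hT oK oA) lerD //.
- by apply: (fine_valuation_le JopenT hv hT (JopenU oK oA) JopenT).
- exact (fine_valuation_le JopenT hv hT (JopenI oK oA) oW sub).
Qed.

End Tame.

Section DirectedSup.
Context {R : realType}.
Variables (F : set (set Jtype -> \bar R)) (g : set Jtype -> \bar R).
Hypotheses (Ftame : F `<=` tame) (Fg : is_directed_sup Jopen F g).
Hypothesis gT : g setT != +oo%E.

Lemma member_valuation f : F f -> is_valuation Jopen f.
Proof. by move=> Ff; case: (Fg.1 f Ff). Qed.

Lemma member_le_sup f U : F f -> Jopen U -> (f U <= g U)%E.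
Proof. by move=> Ff oU; rewrite Fg.2.2.2 //; apply: ereal_sup_ubound; exists f. Qed.

Lemma member_finite f : F f -> f setT != +oo%E.
Proof.
move=> Ff; apply: contra_neq gT => fT; apply/eqP.
by rewrite -leye_eq -fT; exact: member_le_sup Ff JopenT.
Qed.

Lemma member_tame f : F f -> graph_tight f /\ corner_negligible f.
Proof. by move=> Ff; case: (Ftame Ff) => // fT; move: (member_finite Ff); rewrite fT. Qed.

Lemma member_fine_le_sup f U : F f -> Jopen U -> fine (f U) <= fine (g U).
Proof.
move=> Ff oU; have fg : val_le Jopen f g by move=> V oV; exact: member_le_sup.
exact (fine_val_le JopenT (member_valuation Ff) (member_finite Ff) Fg.2.2.1.1 gT fg oU).
Qed.

Lemma sup_approx e : 0 < e -> exists2 f, F f & fine (g setT) < fine (f setT) + e.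
Proof.
move=> e0; have gv := Fg.2.2.1.1.
have gfin : ereal_sup [set f setT | f in F] \is a fin_num.
  by rewrite -(Fg.2.2.2 _ JopenT); exact: (valuation_fin_num JopenT gv gT JopenT).
have [_ [f Ff <-]] := ub_ereal_sup_adherent e0 gfin.
rewrite -(Fg.2.2.2 _ JopenT) (valuation_fineK JopenT gv gT JopenT).
rewrite (valuation_fineK JopenT (member_valuation Ff) (member_finite Ff) JopenT).
by rewrite -EFinB lte_fin => lt_f; exists f => //; lra.
Qed.

Lemma light_window_cover eta : 0 < eta ->
  exists Nw, forall L f, (Nw <= L)%N -> F f -> exists2 V, Jopen V /\ (forall c, (Nw < c <= L)%N -> V (c, None)) &
    (f V <= eta%:E)%E.
Proof.
move=> eta0; apply: contrapT => no_window.
have heavy_window n : exists p : nat * (set Jtype -> \bar R),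
    [/\ (n <= p.1)%N, F p.2 & forall V, Jopen V ->
      (forall c, (n < c <= p.1)%N -> V (c, None)) -> (eta%:E < p.2 V)%E].
  apply: contrapT => none; apply: no_window; exists n => L f nL Ff.
  apply: contrapT => noV; apply: none; exists (L, f); split => // V oV coverV.
  by rewrite ltNge; apply/negP => fV; apply: noV; exists V.
have [next nextP] := choice heavy_window.
pose N j := iter j (fun n => (next n).1) 0%N.
have N_homo : {homo N : i j / (i <= j)%N}.
  apply: homo_leq => [//|y x z|j]; first exact: leq_trans.
  by have [] := nextP (N j).
have gv := Fg.2.2.1.1.
have M0 : 0 <= fine (g setT) := fine_valuation_ge0 JopenT gv gT JopenT.
pose k := (Num.truncn ((fine (g setT) + eta) / eta)).+1.
have k_big : fine (g setT) + eta < k%:R * eta by rewrite -ltr_pdivrMr // truncnS_gt.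
have next_in n : F (next n).2 by case: (nextP n).
have [h Fh f_le_h] := @directed_upper_bound _ _ _ (fun j => (next (N j)).2) k
  (@val_le_trans _ Jopen R) Fg.2.1 (fun j _ => next_in (N j)).
have hv := member_valuation Fh; have hT := member_finite Fh.
have k0 : 0 < k%:R :> R by rewrite ltr0Sn.
have [K0 hK0] := (member_tame Fh).2 (eta / k%:R) (divr_gt0 eta0 k0).
pose K := maxn K0 (N k).+1.
have := @band_mass_bound _ h N eta k K hv hT N_homo (leq_maxr _ _).
have heavy j : (j < k)%N -> eta < fine (h (band (N j) (N j.+1) K)).
  move=> jk; have [_ _ heavyj] := nextP (N j).
  have := heavyj _ (band_open (N j) (N j.+1) K) (fun c cW => conj (or_introl cW) I).
  move/lt_le_trans/(_ (f_le_h j jk _ (band_open _ _ _))).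
  by rewrite (valuation_fineK JopenT hv hT (band_open _ _ _)) lte_fin.
move=> /(_ heavy).
have : fine (h (band (N 0%N) (N k) K)) <= fine (g setT).
  apply: le_trans (member_fine_le_sup Fh JopenT).
  exact: (fine_valuation_le JopenT hv hT (band_open _ _ _) JopenT (subsetT _)).
have : k%:R * fine (h (corner K)) <= eta.
  have := hK0 K (leq_maxl _ _).
  by rewrite (valuation_fineK JopenT hv hT (corner_open K)) lee_fin ler_pdivlMr // mulrC.
lra.
Qed.

Lemma graph_tight_sup : graph_tight g.
Proof.
move=> e e0; have e20 : 0 < e / 2 by rewrite divr_gt0.
have [f0 Ff0 f0_approx] := sup_approx e20.
have [N0 f0_tight] := (member_tame Ff0).1 _ e20.
exists N0 => N N0N m; have oA := above_graph_open N m.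
have f0v := member_valuation Ff0; have f0T := member_finite Ff0.
have gv := Fg.2.2.1.1.
have := f0_tight N N0N m.
rewrite (valuation_fineK JopenT f0v f0T JopenT) (valuation_fineK JopenT f0v f0T oA).
rewrite (valuation_fineK JopenT gv gT JopenT) (valuation_fineK JopenT gv gT oA).
rewrite -!EFinD !lee_fin; have := member_fine_le_sup Ff0 oA; lra.
Qed.

Lemma corner_negligible_sup : corner_negligible g.
Proof.
move=> e e0; pose eta := e / 4; have eta0 : 0 < eta by rewrite divr_gt0.
have [f0 Ff0 f0_approx] := sup_approx eta0.
have [N0 f0_tight] := (member_tame Ff0).1 _ eta0.
have [Nw windowP] := light_window_cover eta0.
exists (maxn N0 Nw).+1 => K NK; rewrite (Fg.2.2.2 _ (corner_open K)).
apply: ge_ereal_sup => _ [f Ff <-].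
have [f' Ff' [ff' f0f']] := Fg.2.1.2 _ _ Ff Ff0.
apply: le_trans (ff' _ (corner_open K)) _.
have f'v := member_valuation Ff'; have f'T := member_finite Ff'.
have f0v := member_valuation Ff0; have f0T := member_finite Ff0.
have [L0 f'_corner] := (member_tame Ff').2 _ eta0.
have KL : (Nw <= maxn L0 K)%N.
  apply: leq_trans (leq_maxr L0 K); apply/ltnW/(leq_ltn_trans _ NK).
  exact: leq_maxr.
have [V [oV coverV] f'V] := windowP (maxn L0 K) f' KL Ff'.
have [m sub] : exists m,
    corner K `&` above_graph (maxn N0 Nw) m `<=` V `|` corner (maxn L0 K).+1.
  by apply: corner_above_graph_cover oV coverV _; rewrite leq_maxr.
have oL := corner_open (maxn L0 K).+1; have oA := above_graph_open (maxn N0 Nw) m.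
have := corner_mass_le f'v f'T (JopenU oV oL) sub.
have := fine_valuation_subadditive JopenT JopenU JopenI f'v f'T oV oL.
have : fine (f' V) <= eta.
  by move: f'V; rewrite (valuation_fineK JopenT f'v f'T oV) lee_fin.
have : fine (f' (corner (maxn L0 K).+1)) <= eta.
  have := f'_corner _ (leqW (leq_maxl L0 K)).
  by rewrite (valuation_fineK JopenT f'v f'T oL) lee_fin.
have := member_fine_le_sup Ff' JopenT.
have := fine_val_le JopenT f0v f0T f'v f'T f0f' oA.
have := f0_tight _ (leq_maxl N0 Nw) m.
rewrite (valuation_fineK JopenT f0v f0T JopenT) (valuation_fineK JopenT f0v f0T oA).
rewrite -EFinD lee_fin (valuation_fineK JopenT f'v f'T (corner_open K)) lee_fin.
have : e = 4 * eta by rewrite /eta mulrC -mulrA mulVf ?mulr1 ?pnatr_eq0.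
lra.
Qed.

End DirectedSup.

Lemma tame_sup {R : realType} (F : set (set Jtype -> \bar R)) g :
  F `<=` tame -> is_directed_sup Jopen F g -> tame g.
Proof.
move=> Ftame Fg; rewrite /tame; have [->|gT] := eqVneq (g setT) +oo%E; [by left|right].
by split; [exact: graph_tight_sup Ftame Fg gT|exact: corner_negligible_sup Ftame Fg gT].
Qed.

Lemma minimal_tame {R : realType} (f : set Jtype -> \bar R) :
  is_minimal_valuation Jopen f -> tame f.
Proof. by apply=> [g _|]; [exact: simple_tame|exact: tame_sup]. Qed.

Theorem corollary3p14 (R : realType) :
  is_valuation Jopen (Jmu R) /\
  is_point_continuous Jopen (Jmu R) /\
  ~ is_minimal_valuation Jopen (Jmu R).
Proof.
split; first exact: Jmu_valuation.
split; first exact: Jmu_point_continuous.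
by move/minimal_tame; exact: Jmu_not_tame.
Qed.
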